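(* Let $G$ be a finite simple graph, let $J\in \mathcal{E}\mathcal{C}(G)$, and let $e$ be a pair of distinct vertices of $G$. Then: (1) for $I\subseteq J$, $I\in\mathcal{E}\mathcal{C}(G)$ if and only if $I\in\mathcal{E}\mathcal{C}(G|_J)$; (2) for $J\subseteq I\subseteq V(G)$, $I\in\mathcal{E}\mathcal{C}(G)$ if and only if $I\setminus J\in\mathcal{E}\mathcal{C}(G^\ast_J)$; (3) $\mathcal{E}\mathcal{C}(G)\subseteq\mathcal{E}\mathcal{C}(G+e)$, and every $I\in\mathcal{E}\mathcal{C}(G+e)\setminus\mathcal{E}\mathcal{C}(G)$ satisfies $e\subseteq I$.
   Context: All graphs are finite simple graphs; $G|_I$ is the induced subgraph on $I\subseteq V(G)$. $\mathcal{E}\mathcal{C}(G)=\{I\subseteq V(G): G|_I \text{ has no connected component of odd order}\}$ (so $\emptyset\in\mathcal{E}\mathcal{C}(G)$). For a pair $e$ of distinct vertices, $G+e$ is the graph obtained from $G$ by adding $e$ as an edge ($G+e=G$ if $e$ is already an edge). The reconnected complement $G^\ast_I$ is the graph on $V(G)\setminus I$ in which $\{a,b\}$ is an edge iff there is a path from $a$ to $b$ in $G|_{I\cup\{a,b\}}$. *)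

(* A finite simple graph is a finType T of vertices together
   with a symmetric irreflexive relation E.  To talk about induced subgraphs
   and reconnected complements, a graph is (V, E) with vertex set V : {set T};
   only the edges of E between vertices of V matter. *)
From mathcomp Require Import all_boot.
Set Implicit Arguments. Unset Strict Implicit. Unset Printing Implicit Defensive.

Section Defs.
Variable T : finType.

Definition restr (A : {set T}) (E : rel T) : rel T :=
  fun x y => [&& x \in A, y \in A & E x y].

(* the connected component of x in G|_A (for x \in A) *)
Definition comp (A : {set T}) (E : rel T) (x : T) : {set T} :=
  [set y | connect (restr A E) x y].

Definition has_odd_comp (A : {set T}) (E : rel T) : bool :=
  [exists x in A, odd #|comp A E x|].

Definition EC (V : {set T}) (E : rel T) : {set {set T}} :=
  [set I : {set T} | (I \subset V) && ~~ has_odd_comp I E].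

(* reconnected complement G^*_J, as a relation on T; its vertex set is V :\: J *)
Definition recon (V : {set T}) (E : rel T) (J : {set T}) : rel T :=
  fun a b => [&& a != b, a \in V :\: J, b \in V :\: J &
                 connect (restr (J :|: [set a; b]) E) a b].

Definition addedge (E : rel T) (u v : T) : rel T :=
  fun x y => [|| E x y, (x == u) && (y == v) | (x == v) && (y == u)].

End Defs.

(* Every component of G|_I that meets I \ J meets it in exactly a component of G^*_J:
   a path of G|_I between two vertices of I \ J, cut at its visits to I \ J, is made
   of segments with interior in J, each of which is an edge of G^*_J.  The rest of
   such a component lies in J and is a union of components of G|_J, all even when
   J is in EC(G); so both components have the same parity.  Adding an edge only
   merges components, and merging even components keeps them even; an edge with an
   endpoint outside I does not change G|_I at all. *)
From Pilot Require Import Defs.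
From mathcomp Require Import all_boot.
Set Implicit Arguments. Unset Strict Implicit. Unset Printing Implicit Defensive.

Section Connect.
Variable T : finType.
Implicit Types (e : rel T) (S : {set T}).

Lemma connect_ind e (P : T -> Prop) x :
  P x -> (forall y z, P y -> e y z -> P z) -> forall y, connect e x y -> P y.
Proof.
move=> Px IH y /connectP [p pth ->] {y}.
elim: p x Px pth => [|z p IHp] x Px //= /andP [exz pz].
exact: (IHp z (IH _ _ Px exz) pz).
Qed.

Lemma even_card_connect_closed e S : connect_sym e ->
  (forall x y, x \in S -> connect e x y -> y \in S) ->
  (forall x, x \in S -> ~~ odd #|[set y | connect e x y]|) -> ~~ odd #|S|.
Proof.
move=> esym; have [m] := ubnP #|S|; elim: m S => // m IH S ltS clS evS.
have [-> | [x xS]] := set_0Vmem S; first by rewrite cards0.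
set C := [set y | connect e x y].
have CS : C \subset S by apply/subsetP => y; rewrite inE; apply: clS.
rewrite -(cardsID C S) (setIidPr CS) oddD (negbTE (evS x xS)) /=.
apply: IH.
- rewrite ltnS in ltS; apply: leq_trans ltS; apply: proper_card; apply/properP.
  by split; [apply: subsetDl | exists x; rewrite ?inE ?connect0].
- move=> y z; rewrite !inE => /andP [yC yS] yz; rewrite (clS y z yS yz) andbT.
  by apply: contra yC => xz; rewrite (connect_trans xz) // esym.
- by move=> y; rewrite inE => /andP [_ /evS].
Qed.

End Connect.

Section Restriction.
Variables (T : finType) (E : rel T).
Implicit Types (A B : {set T}).

Lemma connect_restr_in A x y : x \in A -> connect (restr A E) x y -> y \in A.
Proof. by move=> xA; move: y; apply: connect_ind => // y z _ /and3P []. Qed.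

Lemma restr_sym A : symmetric E -> symmetric (restr A E).
Proof. by move=> Esym x y; rewrite /restr Esym andbCA. Qed.

Lemma connect_restr_subset A B :
  A \subset B -> subrel (connect (restr A E)) (connect (restr B E)).
Proof.
move=> /subsetP AB; apply: connect_sub => x y /and3P [xA yA Exy].
by apply: connect1; rewrite /restr AB ?AB.
Qed.

End Restriction.

Section EvenComponents.
Variables (T : finType) (E : rel T).
Hypothesis Esym : symmetric E.
Implicit Types (A S : {set T}).

Lemma eq_has_odd_comp A E' :
  restr A E =2 restr A E' -> has_odd_comp A E = has_odd_comp A E'.
Proof.
move=> eqE; apply: eq_existsb => x.
suff -> : Defs.comp A E x = Defs.comp A E' x by [].
by apply/setP => y; rewrite !inE (eq_connect eqE).
Qed.

(* A set closed under connectivity in G|_A is a union of components of G|_A. *)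
Lemma even_card_restr_closed A S : ~~ has_odd_comp A E ->
  S \subset A -> (forall x y, x \in S -> connect (restr A E) x y -> y \in S) ->
  ~~ odd #|S|.
Proof.
move=> /exists_inPn evenA /subsetP SA clS.
apply: (even_card_connect_closed (sym_connect_sym (restr_sym A Esym)) clS).
by move=> x /SA /evenA.
Qed.

Lemma has_odd_comp_subrel A E' : subrel (restr A E) (restr A E') ->
  ~~ has_odd_comp A E -> ~~ has_odd_comp A E'.
Proof.
move=> EE' evenA; apply/exists_inPn => x xA.
apply: (even_card_restr_closed evenA).
  by apply/subsetP => y; rewrite inE; apply: connect_restr_in xA.
move=> y z; rewrite !inE => xy yz; apply: connect_trans xy _.
by apply: connect_sub yz => p q /EE' /connect1.
Qed.

End EvenComponents.

Section AddEdge.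
Variables (T : finType) (E : rel T) (u v : T).

Lemma restr_addedge (A : {set T}) :
  (u \notin A) || (v \notin A) -> restr A (addedge E u v) =2 restr A E.
Proof.
move=> uvA x y; rewrite /restr /addedge.
have [xA|] //= := boolP (x \in A); have [yA|] //= := boolP (y \in A).
case: (E x y) => //=; apply/negbTE; apply: contraL uvA.
by case/orP => /andP [/eqP <- /eqP <-]; rewrite xA yA.
Qed.

End AddEdge.

Section ReconnectedComplement.
Variables (T : finType) (E : rel T) (J I : {set T}).
Hypotheses (Esym : symmetric E) (evenJ : ~~ has_odd_comp J E) (JI : J \subset I).
Local Notation K := (I :\: J).
Local Notation R := (recon [set: T] E J).

Lemma recon_step z y w : z \in K -> w \in K -> z != w ->
  connect (restr (J :|: [set z]) E) z y -> E y w -> R z w.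
Proof.
rewrite !inE => /andP [zJ _] /andP [wJ _] zw zy Eyw.
rewrite /recon zw !inE zJ wJ /=.
have JzJzw : J :|: [set z] \subset J :|: [set z; w].
  by rewrite setUS // sub1set !inE eqxx.
apply: connect_trans (connect_restr_subset JzJzw zy) (connect1 _).
have /(subsetP JzJzw) yJzw : y \in J :|: [set z].
  by apply: connect_restr_in zy; rewrite !inE eqxx orbT.
by rewrite /restr yJzw Eyw !inE eqxx !orbT.
Qed.

(* Walking along a path of G|_I from a, keep the last vertex z of K visited: the
   current vertex is reachable from z inside J \cup {z}. *)
Lemma connect_recon a b : a \in K -> b \in K ->
  connect (restr I E) a b -> connect (restr K R) a b.
Proof.
move=> aK bK ab.
have [z [zK az zb]] : exists z, [/\ z \in K, connect (restr K R) a z &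
                                   connect (restr (J :|: [set z]) E) z b].
  move: b {bK} ab; apply: connect_ind; first by exists a; rewrite !connect0.
  move=> y w [z [zK az zy]] /and3P [_ wI Eyw].
  have [wJ | wJ] := boolP (w \in J).
    have yJz : y \in J :|: [set z].
      by apply: connect_restr_in zy; rewrite !inE eqxx orbT.
    exists z; split => //; apply: connect_trans zy (connect1 _).
    by rewrite /restr yJz Eyw !inE wJ.
  have wK : w \in K by rewrite !inE wJ wI.
  have [<- | zw] := eqVneq z w; first by exists z; rewrite connect0.
  exists w; split; rewrite ?connect0 //; apply: connect_trans az (connect1 _).
  by rewrite /restr zK wK (recon_step zK wK zw zy Eyw).
have : b \in J :|: [set z] by apply: connect_restr_in zb; rewrite !inE eqxx orbT.
by move: bK; rewrite !inE => /andP [/negbTE -> _] /= /eqP ->.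
Qed.

Lemma recon_connect a b : connect (restr K R) a b -> connect (restr I E) a b.
Proof.
apply: connect_sub => y w /and3P [yK wK /and4P [_ _ _ yw]].
apply: connect_restr_subset yw; rewrite !subUset JI !sub1set.
by move: yK wK; rewrite !inE => /andP [_ ->] /andP [_ ->].
Qed.

Lemma comp_recon b : b \in K -> Defs.comp I E b :\: J = Defs.comp K R b.
Proof.
move=> bK; have bI : b \in I by move: bK; rewrite inE => /andP [].
apply/setP => y; rewrite !inE; apply/andP/idP => [[yJ by_] | by_].
  by apply: connect_recon => //; rewrite inE yJ (connect_restr_in bI by_).
have : y \in K by apply: connect_restr_in by_.
by rewrite inE => /andP [-> _]; split => //; apply: recon_connect.
Qed.

Lemma odd_comp_setD x :
  x \in I -> odd #|Defs.comp I E x| = odd #|Defs.comp I E x :\: J|.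
Proof.
move=> xI; rewrite -(cardsID J) oddD.
suff /negbTE -> : ~~ odd #|Defs.comp I E x :&: J| by [].
apply: (even_card_restr_closed Esym evenJ); first exact: subsetIr.
move=> y z; rewrite !inE => /andP [xy yJ] yz.
rewrite (connect_restr_in yJ yz) andbT; apply: connect_trans xy _.
exact: connect_restr_subset yz.
Qed.

Lemma has_odd_comp_recon : has_odd_comp I E = has_odd_comp K R.
Proof.
apply/exists_inP/exists_inP => [[x xI] | [b bK]]; last first.
  have bI : b \in I by move: bK; rewrite inE => /andP [].
  by rewrite -comp_recon // => oddb; exists b; rewrite ?odd_comp_setD.
rewrite odd_comp_setD // => oddx.
have /set0Pn [b] : Defs.comp I E x :\: J != set0.
  by apply: contraTneq oddx => ->; rewrite cards0.
rewrite !inE => /andP [bJ xb].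
have bK : b \in K by rewrite inE bJ (connect_restr_in xI xb).
exists b; rewrite // -comp_recon //.
suff -> : Defs.comp I E b = Defs.comp I E x by [].
have Isym := sym_connect_sym (restr_sym I Esym).
by apply/setP => y; rewrite !inE (same_connect Isym xb).
Qed.

End ReconnectedComplement.

Theorem mainTheorem4 (T : finType) (E : rel T)
    (Esym : symmetric E) (Eirr : irreflexive E)
    (J : {set T}) (u v : T) :
  J \in EC [set: T] E -> u != v ->
  (forall I : {set T}, I \subset J ->
     (I \in EC [set: T] E) = (I \in EC J E)) /\
  (forall I : {set T}, J \subset I ->
     (I \in EC [set: T] E) =
     ((I :\: J) \in EC (~: J) (recon [set: T] E J))) /\
  (EC [set: T] E \subset EC [set: T] (addedge E u v)) /\
  (forall I : {set T}, I \in EC [set: T] (addedge E u v) ->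
     I \notin EC [set: T] E -> (u \in I) && (v \in I)).
Proof.
rewrite inE => /andP [_ evenJ] _.
split; first by move=> I IJ; rewrite !inE subsetT IJ.
split.
  by move=> I JI; rewrite !inE subsetT subsetDr (has_odd_comp_recon Esym evenJ JI).
split.
  apply/subsetP => I; rewrite !inE !subsetT; apply: has_odd_comp_subrel => //.
  by move=> x y /and3P [xI yI Exy]; rewrite /restr xI yI /addedge Exy.
move=> I; rewrite !inE !subsetT /= negbK => evenI; apply: contraLR.
by rewrite negb_and => uvI; rewrite -(eq_has_odd_comp (restr_addedge E uvI)).
Qed.
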